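(* Given any three spin-decorated horospheres $(\mathfrak{h}_n,W_n)$ in $\mathcal{H}^4$, $n=1,2,3$, let $\lambda_{mn}$ denote the lambda length from $(\mathfrak{h}_m,W_m)$ to $(\mathfrak{h}_n,W_n)$. Then $\lambda_{12}\lambda_{32}^{-1}\lambda_{31}\in\mathcal{V}\cup\{\infty\}$, where $\mathcal{V}=\mathrm{span}_\mathbb{R}\{1,i,j\}\subset\mathbb{H}$.
   Context: $\mathcal{H}^4$ is oriented hyperbolic 4-space (in the upper half-space model $(\partial_w,\partial_x,\partial_y,\partial_z)$ is positive). A horosphere is $\{x\in\mathcal{H}^4:\langle x,p\rangle=1\}$ in the hyperboloid model, $p$ future lightlike. A decoration on a horosphere is a pair of perpendicular, parallel, oriented tangent line fields with unit fields $v^i,v^j$; with inward normal $N^{in}$ (away from the centre) and outward normal $N^{out}=-N^{in}$ the inward/outward frame fields are the oriented orthonormal frames $(v^{1,in},v^i,v^j,N^{in})$, $(v^{1,out},v^i,v^j,N^{out})$. A spin decoration is a pair $(W^{in},W^{out})$ of continuous lifts of these to the spin double cover of the frame bundle, $W^{in}$ being obtained from $W^{out}$ by rotation through $\pi$ in the plane orthogonal to $v^i,v^j$ from $N^{out}$ towards $v^{1,out}$. Lambda length from $(\mathfrak{h}_1,W_1)$ to $(\mathfrak{h}_2,W_2)$: $0$ if the centres coincide; otherwise with $\gamma$ the oriented geodesic from the centre of $\mathfrak{h}_1$ to that of $\mathfrak{h}_2$ and $p_m=\gamma\cap\mathfrak{h}_m$, translate $W_1^{in}(p_1)$ along $\gamma$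 by signed distance $\rho$ and then rotate by $\theta\in\mathbb{R}/4\pi\mathbb{Z}$ in the 3-plane orthogonal to $\gamma$ at $p_2$ (oriented so that a basis followed by the tangent of $\gamma$ is positive; right-handed angle) about the axis directed by a unit vector whose coordinates $v\in\mathcal{V}$ are taken w.r.t. the first three frame vectors identified with $1,i,j$, to reach $W_2^{out}(p_2)$; then $\lambda_{12}=\exp((\rho+\theta vk)/2)$. *)

From HB Require Import structures.
From mathcomp Require Import all_boot all_order all_algebra.
From mathcomp Require Import all_classical all_reals all_analysis.
Set Implicit Arguments. Unset Strict Implicit. Unset Printing Implicit Defensive.
Import Order.TTheory GRing.Theory Num.Theory.
Import numFieldNormedType.Exports.
Local Open Scope classical_set_scope.
Local Open Scope ring_scope.

Section HorosphereDefs.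
Variable R : realType.

Record quat := Quat { qr : R; qi : R; qj : R; qk : R }.
Definition qzero : quat := Quat 0 0 0 0.
Definition qmul (p q : quat) : quat :=
  Quat (qr p * qr q - qi p * qi q - qj p * qj q - qk p * qk q)
       (qr p * qi q + qi p * qr q + qj p * qk q - qk p * qj q)
       (qr p * qj q - qi p * qk q + qj p * qr q + qk p * qi q)
       (qr p * qk q + qi p * qj q - qj p * qi q + qk p * qr q).
Definition qinv (q : quat) : quat :=
  let n := qr q ^+ 2 + qi q ^+ 2 + qj q ^+ 2 + qk q ^+ 2 in
  Quat (qr q / n) (- qi q / n) (- qj q / n) (- qk q / n).
Definition inV (q : quat) : Prop := qk q = 0.

Definition vec := 'rV[R]_5.
Definition frm := 'M[R]_5.
Definition co (x : vec) (k : nat) : R := x ord0 (inord k).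
Definition mink (x y : vec) : R :=
  co x 0 * co y 0 - \sum_(1 <= k < 5) co x k * co y k.
Definition hyp (x : vec) : Prop := mink x x = 1 /\ 0 < co x 0.
Definition future_lightlike (p : vec) : Prop := mink p p = 0 /\ 0 < co p 0.
Definition horosphere (p : vec) : set vec := [set x | hyp x /\ mink x p = 1].
Definition tangent_h (p x w : vec) : Prop := mink w x = 0 /\ mink w p = 0.

(* ---------- oriented orthonormal frames (rows: point, e1, e2, e3, e4) ---------- *)
Definition eta (i j : nat) : R := if i == j then (if i == 0%N then 1 else -1) else 0.
Definition rowv (M : frm) (k : nat) : vec := row (inord k) M.
Definition Fr : set frm := [set M |
  (forall i j, (i < 5)%N -> (j < 5)%N -> mink (rowv M i) (rowv M j) = eta i j)
  /\ 0 < co (rowv M 0) 0 /\ 0 < \det M].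
Definition mkframe (x e1 e2 e3 e4 : vec) : frm :=
  \matrix_(i < 5, j < 5) (nth x [:: x; e1; e2; e3; e4] i) ord0 j.
Definition mapframe (f : vec -> vec) (M : frm) : frm :=
  \matrix_(i < 5, j < 5) (f (row i M)) ord0 j.

Definition I01 : set R := [set t | 0 <= t <= 1].
Definition fpath (c : R -> frm) : Prop :=
  (forall t, I01 t -> Fr (c t)) /\
  (forall i j, {within I01, continuous (fun t => c t i j)}).
Definition pconcat (c d : R -> frm) : R -> frm :=
  fun t => if t <= 2^-1 then c (2 * t) else d (2 * t - 1).
Definition homotopic (c d : R -> frm) : Prop :=
  exists H : R -> R -> frm,
    (forall s t, I01 s -> I01 t -> Fr (H s t)) /\
    (forall i j, {within [set st : R * R | I01 st.1 /\ I01 st.2],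
                  continuous (fun st => H st.1 st.2 i j)}) /\
    (forall t, I01 t -> H 0 t = c t /\ H 1 t = d t) /\
    (forall s, I01 s -> H s 0 = c 0 /\ H s 1 = c 1).
(* A point of the spin double cover (= universal cover of the frame bundle,
   based at the identity frame 1%:M) over a frame M is represented by a path
   c of frames from 1%:M to M, up to homotopy rel endpoints. *)

Definition parallel (p : vec) (v : vec -> vec) : Prop :=
  forall c : R -> vec,
    (forall t, horosphere p (c t)) ->
    (forall t (k : 'I_5), derivable (fun s => co (c s) k) t 1) ->
    forall t,
      (forall k : 'I_5, derivable (fun s => co (v (c s)) k) t 1) /\
      (forall w, tangent_h p (c t) w ->
         mink (\row_(k < 5) derive1 (fun s => co (v (c s)) k) t) w = 0).

Record sdh := SDH {
  centre : vec;
  vi : vec -> vec;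
  vj : vec -> vec;
  v1 : vec -> vec;
  wout : vec -> R -> frm
}.
Definition Nout (D : sdh) (x : vec) : vec := centre D - x.
Definition Nin (D : sdh) (x : vec) : vec := x - centre D.
Definition Fout (D : sdh) (x : vec) : frm :=
  mkframe x (v1 D x) (vi D x) (vj D x) (Nout D x).
Definition Fin (D : sdh) (x : vec) : frm :=
  mkframe x (- v1 D x) (vi D x) (vj D x) (Nin D x).
Definition rotpi (D : sdh) (x : vec) : R -> frm := fun t =>
  mkframe x (cos (pi * t) *: v1 D x - sin (pi * t) *: Nout D x) (vi D x) (vj D x)
            (cos (pi * t) *: Nout D x + sin (pi * t) *: v1 D x).
Definition win (D : sdh) (x : vec) : R -> frm := pconcat (wout D x) (rotpi D x).

Definition is_sdh (D : sdh) : Prop :=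
  let h := horosphere (centre D) in
  future_lightlike (centre D) /\
  (forall x, h x ->
     tangent_h (centre D) x (vi D x) /\ tangent_h (centre D) x (vj D x) /\
     mink (vi D x) (vi D x) = -1 /\ mink (vj D x) (vj D x) = -1 /\
     mink (vi D x) (vj D x) = 0) /\
  parallel (centre D) (vi D) /\ parallel (centre D) (vj D) /\
  (forall x, h x -> Fr (Fout D x)) /\
  (forall x, h x -> fpath (wout D x) /\ wout D x 0 = 1%:M /\ wout D x 1 = Fout D x) /\
  (* continuity of the lift W^out *)
  (forall sg : R -> vec, (forall t, I01 t -> h (sg t)) ->
     (forall k : 'I_5, {within I01, continuous (fun t => co (sg t) k)}) ->
     homotopic (pconcat (wout D (sg 0)) (fun t => Fout D (sg t))) (wout D (sg 1))).

Definition same_centre (p q : vec) : Prop := exists a : R, 0 < a /\ q = a *: p.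
Definition on_geod (p1 p2 x : vec) : Prop := hyp x /\ exists a b : R, x = a *: p1 + b *: p2.
(* hyperbolic translation by signed distance s along the geodesic from [p1] to [p2] *)
Definition Lmap (p1 p2 : vec) (s : R) (w : vec) : vec :=
  w + ((expR (- s) - 1) * mink w p2 / mink p1 p2) *: p1
    + ((expR s - 1) * mink w p1 / mink p1 p2) *: p2.
Definition transl_path (p1 p2 : vec) (rho : R) (M : frm) : R -> frm :=
  fun t => mapframe (Lmap p1 p2 (t * rho)) M.
Definition crossmx (v : 'rV[R]_3) : 'M[R]_3 :=
  \matrix_(a < 3, b < 3)
   (let x := v ord0 (inord 0) in let y := v ord0 (inord 1) in let z := v ord0 (inord 2) in
    match nat_of_ord a, nat_of_ord b with
    | 0, 1 => - z | 0, 2 => y | 1, 0 => z | 1, 2 => - x | 2, 0 => - y | 2, 1 => x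
    | _, _ => 0 end).
Definition rodrigues (th : R) (v : 'rV[R]_3) : 'M[R]_3 :=
  cos th *: 1%:M + sin th *: crossmx v + (1 - cos th) *: (v^T *m v).
(* rotate frame vectors e1,e2,e3 by Q (coordinates w.r.t. e1,e2,e3) *)
Definition rotframe (Q : 'M[R]_3) (M : frm) : frm :=
  \matrix_(i < 5, j < 5)
    (if (0 < i < 4)%N then \sum_(b < 3) Q b (inord i.-1) * M (inord b.+1) j else M i j).
Definition rot_path (th : R) (v : 'rV[R]_3) (M : frm) : R -> frm :=
  fun t => rotframe (rodrigues (t * th) v) M.
Definition unit3 (v : 'rV[R]_3) : Prop := \sum_(a < 3) v ord0 a ^+ 2 = 1.
(* exp((rho + th v k)/2), v = v_0 + v_1 i + v_2 j, so v k = v_2 i - v_1 j + v_0 k *)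
Definition lam (rho th : R) (v : 'rV[R]_3) : quat :=
  let e := expR (rho / 2) in let c := cos (th / 2) in let s := sin (th / 2) in
  Quat (e * c) (e * s * v ord0 (inord 2)) (- (e * s * v ord0 (inord 1)))
       (e * s * v ord0 (inord 0)).

Definition is_lambda (D1 D2 : sdh) (l : quat) : Prop :=
  let p1 := centre D1 in let p2 := centre D2 in
  (same_centre p1 p2 /\ l = qzero) \/
  (~ same_centre p1 p2 /\
   exists (q1 q2 : vec) (rho th : R) (v : 'rV[R]_3),
     on_geod p1 p2 q1 /\ horosphere p1 q1 /\
     on_geod p1 p2 q2 /\ horosphere p2 q2 /\ unit3 v /\
     homotopic
       (pconcat (pconcat (win D1 q1) (transl_path p1 p2 rho (Fin D1 q1)))
                (rot_path th v (mapframe (Lmap p1 p2 rho) (Fin D1 q1))))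
       (wout D2 q2) /\
     l = lam rho th v).

End HorosphereDefs.

(* Choose [s <> 0] Minkowski-orthogonal to the three centres.  Translations along a
   geodesic joining two of the centres fix [s]; since [vi], [vj] are parallel and [v1]
   completes an oriented frame, the coordinates [sigma D] of [s] in the frame
   [(v1, vi, vj)] of a decorated horosphere [D] do not depend on the point of the
   horosphere.  The lambda length [lambda_mn = e^(rho/2) q_mn] records a rotation [q_mn]
   carrying the inward frame of [D_m], whose first vector is [-v1], to the outward frame
   of [D_n]; hence [sigma_n = R(q_mn)^T F sigma_m] with [F] the reflection of the first
   coordinate.  Around the triangle, [sigma_1 <> 0] is then fixed by the improper
   rotation [R(q_12 q_32^* q_31)^T F], so this quaternion has no [i]-component, which
   after relabelling the axes is the vanishing [k]-component of
   [lambda_12 lambda_32^-1 lambda_31]. *)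

From mathcomp Require Import all_boot all_order all_algebra.
From mathcomp Require Import all_classical all_reals all_analysis.
From mathcomp Require Import ring lra perm.
Set Implicit Arguments. Unset Strict Implicit. Unset Printing Implicit Defensive.
Import Order.TTheory GRing.Theory Num.Theory.
Import numFieldNormedType.Exports.
Local Open Scope ring_scope.

Section MinkowskiSpace.
Variable R : realType.
Implicit Types (x y z : vec R) (M : frm R).

Lemma sum3 (V : nmodType) (F : 'I_3 -> V) :
  \sum_(i < 3) F i = F (inord 0) + F (inord 1) + F (inord 2).
Proof.
rewrite !big_ord_recl big_ord0 addr0 !addrA.
by congr (_ + _ + _); congr F; apply/val_inj; rewrite /= inordK.
Qed.

Lemma sum5 (V : nmodType) (F : 'I_5 -> V) : \sum_(i < 5) F i =
  F (inord 0) + F (inord 1) + F (inord 2) + F (inord 3) + F (inord 4).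
Proof.
rewrite !big_ord_recl big_ord0 addr0 !addrA.
by congr (_ + _ + _ + _ + _); congr F; apply/val_inj; rewrite /= inordK.
Qed.

Lemma prod5 (F : 'I_5 -> R) : \prod_(i < 5) F i =
  F (inord 0) * F (inord 1) * F (inord 2) * F (inord 3) * F (inord 4).
Proof.
rewrite !big_ord_recl big_ord0 mulr1 !mulrA.
by congr (_ * _ * _ * _ * _); congr F; apply/val_inj; rewrite /= inordK.
Qed.

Lemma coD x y k : co (x + y) k = co x k + co y k. Proof. by rewrite /co mxE. Qed.
Lemma coZ a x k : co (a *: x) k = a * co x k. Proof. by rewrite /co mxE. Qed.
Lemma coN x k : co (- x) k = - co x k. Proof. by rewrite /co mxE. Qed.
Lemma coB x y k : co (x - y) k = co x k - co y k. Proof. by rewrite /co !mxE. Qed.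

Lemma minkE x y : mink x y = co x 0 * co y 0 - co x 1 * co y 1 - co x 2 * co y 2
   - co x 3 * co y 3 - co x 4 * co y 4.
Proof. by rewrite /mink big_ltn // big_ltn // big_ltn // big_ltn // big_geq //; ring. Qed.

Lemma minkC x y : mink x y = mink y x.
Proof. by rewrite !minkE; ring. Qed.
Lemma minkDl x y z : mink (x + y) z = mink x z + mink y z.
Proof. by rewrite !minkE !coD; ring. Qed.
Lemma minkZl a x z : mink (a *: x) z = a * mink x z.
Proof. by rewrite !minkE !coZ; ring. Qed.
Lemma minkNl x z : mink (- x) z = - mink x z.
Proof. by rewrite !minkE !coN; ring. Qed.
Lemma minkBl x y z : mink (x - y) z = mink x z - mink y z.
Proof. by rewrite minkDl minkNl. Qed.
Lemma minkDr x y z : mink x (y + z) = mink x y + mink x z.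
Proof. by rewrite !(minkC x) minkDl. Qed.
Lemma minkZr a x z : mink x (a *: z) = a * mink x z.
Proof. by rewrite !(minkC x) minkZl. Qed.
Lemma minkBr x y z : mink x (y - z) = mink x y - mink x z.
Proof. by rewrite !(minkC x) minkBl. Qed.

Definition minkJ : 'M[R]_5 := \matrix_(i < 5, j < 5) eta R i j.

Lemma minkJ_invol : minkJ *m minkJ = 1%:M.
Proof.
apply/matrixP=> i j; rewrite !mxE sum5 !mxE !inordK //.
by case: i => [[|[|[|[|[|i]]]]] hi] //; case: j => [[|[|[|[|[|j]]]]] hj] //;
  rewrite /eta /=; ring.
Qed.

Lemma mink_mx x y : mink x y = (x *m minkJ *m y^T) ord0 ord0.
Proof. by rewrite minkE !mxE sum5 !mxE !sum5 ?mxE ?inordK // /eta /= /co; ring. Qed.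

Lemma exists_mink_orth3 (p1 p2 p3 : vec R) :
  exists s : vec R, [/\ s != 0, mink s p1 = 0, mink s p2 = 0 & mink s p3 = 0].
Proof.
pose A : 'M[R]_(5, 1 + 1 + 1) :=
  row_mx (row_mx (minkJ *m p1^T) (minkJ *m p2^T)) (minkJ *m p3^T).
have K_nz : kermx A != 0.
  by rewrite -mxrank_eq0 mxrank_ker -lt0n subn_gt0 (leq_ltn_trans (rank_leq_col A)).
have [i Ki] : exists i, row i (kermx A) != 0.
  apply/existsP; move: K_nz; apply: contraR; rewrite negb_exists => /forallP K0.
  by apply/eqP/row_matrixP => i; rewrite row0; apply/eqP; move: (K0 i); rewrite negbK.
exists (row i (kermx A)); split=> //.
all: have : row i (kermx A) *m A = 0 by rewrite -row_mul mulmx_ker row0.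
all: rewrite !mul_mx_row => /eqP; rewrite !row_mx_eq0 => /andP[/andP[/eqP e1 /eqP e2] /eqP e3].
all: by rewrite mink_mx -!mulmxA ?e1 ?e2 ?e3 mxE.
Qed.

Lemma rowvE M k j : co (rowv M k) j = M (inord k) (inord j).
Proof. by rewrite /co /rowv mxE. Qed.

Lemma mink_rowv M y k : (k < 5)%N ->
  mink y (rowv M k) = (y *m minkJ *m M^T) ord0 (inord k).
Proof.
by move=> hk; rewrite minkE !rowvE !mxE sum5 !mxE !sum5 ?mxE ?inordK // /eta /= /co; ring.
Qed.

Lemma Fr_mink M i j : Fr M -> (i < 5)%N -> (j < 5)%N ->
  mink (rowv M i) (rowv M j) = eta R i j.
Proof. by case=> H _; apply: H. Qed.

Lemma Fr_gram M : Fr M -> M *m minkJ *m M^T = minkJ.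
Proof.
move=> F; apply/matrixP=> i j.
rewrite [RHS]mxE -(Fr_mink F (ltn_ord i) (ltn_ord j)) minkE !rowvE !inord_val.
by do 4 rewrite ?mxE ?sum5; rewrite ?mxE ?inordK // /eta /=; ring.
Qed.

Lemma Fr_coord M y j : Fr M -> (j < 5)%N ->
  co y j = mink y (rowv M 0) * M (inord 0) (inord j) - mink y (rowv M 1) * M (inord 1) (inord j)
    - mink y (rowv M 2) * M (inord 2) (inord j) - mink y (rowv M 3) * M (inord 3) (inord j)
    - mink y (rowv M 4) * M (inord 4) (inord j).
Proof.
move=> F hj.
have invM : minkJ *m M^T *m minkJ *m M = 1%:M.
  by apply: mulmx1C; rewrite !mulmxA (Fr_gram F) minkJ_invol.
have E : y *m (minkJ *m M^T *m minkJ *m M) = y by rewrite invM mulmx1.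
rewrite !mink_rowv // {1}/co -{1}E !mulmxA.
by do 5 rewrite ?mxE ?sum5; rewrite !inordK // /eta /=; ring.
Qed.

Lemma Fr_parseval M y z : Fr M ->
  mink y z = mink y (rowv M 0) * mink z (rowv M 0) - mink y (rowv M 1) * mink z (rowv M 1)
   - mink y (rowv M 2) * mink z (rowv M 2) - mink y (rowv M 3) * mink z (rowv M 3)
   - mink y (rowv M 4) * mink z (rowv M 4).
Proof.
move=> F; rewrite (minkE y z) !(Fr_coord y F) //.
by rewrite !(minkE z (rowv M _)) !rowvE; ring.
Qed.

End MinkowskiSpace.

Section Horoframes.
Variable R : realType.
Implicit Types (p s x y : vec R) (M : frm R).

Definition horoframe p M : Prop :=
  [/\ Fr M, rowv M 4 = p - rowv M 0 & mink (rowv M 0) p = 1].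

Lemma horoframe_mink4 p M y : horoframe p M ->
  mink y (rowv M 4) = mink y p - mink y (rowv M 0).
Proof. by case=> _ -> _; rewrite minkBr. Qed.

Lemma horoframe_tangent p M k : horoframe p M -> (0 < k < 4)%N ->
  mink (rowv M k) p = 0.
Proof.
move=> hM /andP[k0 k4]; have [F _ _] := hM.
have k5 : (k < 5)%N by rewrite (ltn_trans k4).
have := Fr_mink F k5 (isT : (4 < 5)%N).
rewrite (horoframe_mink4 _ hM) (Fr_mink F k5 (isT : (0 < 5)%N)).
by rewrite /eta; case: k k0 k4 k5 => [|[|[|[|k]]]] //= _ _ _; rewrite subr0.
Qed.

(* [s] orthogonal to [e1, e2, e3] and to [p] is a multiple of [p]. *)
Lemma horoframe_orth_eq0 p q M s : horoframe p M -> mink s p = 0 -> mink s q = 0 ->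
  mink p q != 0 -> mink s (rowv M 1) = 0 -> mink s (rowv M 2) = 0 -> mink s (rowv M 3) = 0 ->
  s = 0.
Proof.
move=> hM sp sq pq s1 s2 s3; have [F E4 _] := hM.
set k := mink s (rowv M 0).
have sE j : (j < 5)%N -> co s j = k * co p j.
  move=> hj; rewrite (Fr_coord s F hj) s1 s2 s3 (horoframe_mink4 _ hM) sp -/k.
  by have := congr1 (fun v => co v j) E4; rewrite /= coB !rowvE => ->; ring.
have k0 : k = 0.
  have : mink s q = k * mink p q by rewrite !minkE !sE //; ring.
  by rewrite sq => /esym/eqP; rewrite mulf_eq0 (negbTE pq) orbF => /eqP.
apply/rowP => j; have -> : s ord0 j = co s j by rewrite /co inord_val.
by rewrite sE // k0 mul0r mxE.
Qed.

Definition mk5 (l : seq (seq R)) : 'M[R]_5 := \matrix_(i < 5, j < 5) nth 0 (nth [::] l i) j.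

Lemma tperm04 (r : nat) : (r < 5)%N ->
  tperm (inord 0 : 'I_5) (inord 4) (inord r)
  = inord (if r == 0%N then 4%N else if r == 4%N then 0%N else r).
Proof.
move=> hr; apply/val_inj; rewrite permE /= -!(inj_eq val_inj) /=.
by case: r hr => [|[|[|[|[|r]]]]] //= _; rewrite !inordK.
Qed.

(* The factorisation [L * (swap rows 0, 4 of T) * U^T] has unitriangular [L], [U]
   and lower-triangular [T] with diagonal [1, b, 1, 1, -1]. *)
Lemma det_horoframe_change (k0 k1 k2 k3 a b al be : R) :
  \det (mk5 [:: [:: k0; k1; k2; k3; k0 - 1]; [:: a; b; 0; 0; a]; [:: al; 0; 1; 0; al];
               [:: be; 0; 0; 1; be]; [:: 1 - k0; -k1; -k2; -k3; 2 - k0]]) = b.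
Proof.
set T := mk5 [:: [:: 1; 0; 0; 0; 0]; [:: a; b; 0; 0; 0]; [:: al; 0; 1; 0; 0];
               [:: be; 0; 0; 1; 0]; [:: k0; k1; k2; k3; -1]].
set L := mk5 [:: [:: 1; 0; 0; 0; 0]; [:: 0; 1; 0; 0; 0]; [:: 0; 0; 1; 0; 0];
               [:: 0; 0; 0; 1; 0]; [:: -1; 0; 0; 0; 1]].
set U := mk5 [:: [:: 1; 0; 0; 0; 0]; [:: 0; 1; 0; 0; 0]; [:: 0; 0; 1; 0; 0];
               [:: 0; 0; 0; 1; 0]; [:: 1; 0; 0; 0; 1]].
have -> : mk5 [:: [:: k0; k1; k2; k3; k0 - 1]; [:: a; b; 0; 0; a]; [:: al; 0; 1; 0; al];
               [:: be; 0; 0; 1; be]; [:: 1 - k0; -k1; -k2; -k3; 2 - k0]] =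
          L *m xrow (inord 0) (inord 4) T *m U^T.
  apply/matrixP=> i j; rewrite -(inord_val i) -(inord_val j).
  have := ltn_ord i; have := ltn_ord j; move: (nat_of_ord i) (nat_of_ord j) => x y hy hx.
  rewrite /L /T /U; do 4 rewrite ?mxE ?sum5. rewrite !tperm04 // !inordK //.
  by case: x hx => [|[|[|[|[|x]]]]] //= _; case: y hy => [|[|[|[|[|y]]]]] //= _;
    rewrite ?inordK //=; ring.
have det_trig (M : 'M[R]_5) : (forall i j : 'I_5, (i < j)%N -> M i j = 0) ->
    \det M = \prod_(i < 5) M i i.
  by move=> HM; apply: det_trig; apply/is_trig_mxP.
rewrite !det_mulmx det_tr xrowE det_mulmx det_perm odd_tperm.
rewrite -(inj_eq val_inj) /= !inordK //=.
rewrite !det_trig ?prod5 ?mxE ?inordK //=; first ring.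
all: by move=> [[|[|[|[|[|i]]]]] hi] [[|[|[|[|[|j]]]]] hj] //= _; rewrite mxE.
Qed.

Section TwoHoroframes.
Variables (p : vec R) (M M' : frm R).
Hypotheses (p_null : mink p p = 0) (hM : horoframe p M) (hM' : horoframe p M').
Hypothesis e2_eq : forall y, mink y p = 0 -> mink (rowv M' 2) y = mink (rowv M 2) y.
Hypothesis e3_eq : forall y, mink y p = 0 -> mink (rowv M' 3) y = mink (rowv M 3) y.

Lemma horoframe_e1_perp :
  mink (rowv M' 1) (rowv M 2) = 0 /\ mink (rowv M' 1) (rowv M 3) = 0.
Proof.
have [F' _ _] := hM'; have t1' := horoframe_tangent hM' (isT : (0 < 1 < 4)%N).
by rewrite !(minkC (rowv M' 1)) -e2_eq // -e3_eq // !(Fr_mink F').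
Qed.

Lemma horoframe_change_mx : exists k0 k1 k2 k3 a al be : R,
  M' = mk5 [:: [:: k0; k1; k2; k3; k0 - 1];
               [:: a; - mink (rowv M' 1) (rowv M 1); 0; 0; a]; [:: al; 0; 1; 0; al];
               [:: be; 0; 0; 1; be]; [:: 1 - k0; -k1; -k2; -k3; 2 - k0]] *m M.
Proof.
have [F _ x0p] := hM; have [F' E4' x0p'] := hM'.
set r0 := rowv M 0; set r1 := rowv M 1; set r2 := rowv M 2; set r3 := rowv M 3.
set r0' := rowv M' 0; set r1' := rowv M' 1; set r2' := rowv M' 2; set r3' := rowv M' 3.
have m4 := horoframe_mink4 _ hM.
have [t1 t2 t3] : [/\ mink p r1 = 0, mink p r2 = 0 & mink p r3 = 0].
  by rewrite !(minkC p) !(horoframe_tangent hM).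
have [t1' t2' t3'] : [/\ mink r1' p = 0, mink r2' p = 0 & mink r3' p = 0].
  by rewrite !(horoframe_tangent hM').
have o := Fr_mink F.
have [a12 a13] := horoframe_e1_perp.
have [a21 a22 a23] : [/\ mink r2' r1 = 0, mink r2' r2 = -1 & mink r2' r3 = 0].
  by rewrite !e2_eq ?(minkC _ p) // !o.
have [a31 a32 a33] : [/\ mink r3' r1 = 0, mink r3' r2 = 0 & mink r3' r3 = -1].
  by rewrite !e3_eq ?(minkC _ p) // !o.
have coordE (y : vec R) j c0 c1 c2 c3 c4 : (j < 5)%N ->
    c0 = mink y r0 -> c1 = - mink y r1 -> c2 = - mink y r2 ->
    c3 = - mink y r3 -> c4 = - mink y (rowv M 4) ->
    co y j = c0 * M (inord 0) (inord j) + c1 * M (inord 1) (inord j)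
      + c2 * M (inord 2) (inord j) + c3 * M (inord 3) (inord j) + c4 * M (inord 4) (inord j).
  by move=> hj -> -> -> -> ->; rewrite (Fr_coord y F hj); ring.
exists (mink r0' r0), (- mink r0' r1), (- mink r0' r2), (- mink r0' r3).
exists (mink r1' r0), (mink r2' r0), (mink r3' r0).
apply/matrixP=> i j; rewrite -(inord_val i) -(inord_val j).
have := ltn_ord i; have := ltn_ord j; move: (nat_of_ord i) (nat_of_ord j) => x y hy hx.
rewrite mxE sum5 !mxE !inordK // -rowvE.
case: x hx => [|[|[|[|[|x]]]]] //= _; apply: coordE; rewrite // ?E4' ?m4 ?minkBl.
all: rewrite ?x0p ?x0p' ?(minkC p r0) ?x0p ?t1 ?t2 ?t3 ?t1' ?t2' ?t3' ?p_null.
all: rewrite ?a12 ?a13 ?a21 ?a22 ?a23 ?a31 ?a32 ?a33; ring.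
Qed.

(* [e1'] is [e1] or [-e1] modulo [p]; orientation rules out the sign [-1]. *)
Lemma horoframe_e1_mink : mink (rowv M' 1) (rowv M 1) = -1.
Proof.
have [F _ _] := hM; have [F' _ _] := hM'.
have [[_ [_ dM]] [_ [_ dM']]] := (F, F').
have [a12 a13] := horoframe_e1_perp.
have t1' := horoframe_tangent hM' (isT : (0 < 1 < 4)%N).
set b := - mink (rowv M' 1) (rowv M 1).
have b2 : b ^+ 2 = 1.
  have := Fr_parseval (rowv M' 1) (rowv M' 1) F.
  by rewrite (Fr_mink F') // a12 a13 (horoframe_mink4 _ hM) t1' /b /eta /=; nra.
have b_gt0 : 0 < b.
  have [k0 [k1 [k2 [k3 [a [al [be EM]]]]]]] := horoframe_change_mx.
  by move: dM'; rewrite {1}EM det_mulmx det_horoframe_change pmulr_lgt0.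
have b1 : b = 1 by nra.
by rewrite -b1 /b opprK.
Qed.

Lemma horoframe_e1_eq s : mink s p = 0 -> mink (rowv M' 1) s = mink (rowv M 1) s.
Proof.
move=> sp; have [F _ _] := hM; have [a12 a13] := horoframe_e1_perp.
have t1' := horoframe_tangent hM' (isT : (0 < 1 < 4)%N).
rewrite (Fr_parseval (rowv M' 1) s F) (horoframe_mink4 _ hM) t1' a12 a13 horoframe_e1_mink.
by rewrite (horoframe_mink4 _ hM) sp (minkC s (rowv M 1)); ring.
Qed.

End TwoHoroframes.
End Horoframes.

Section Horospheres.
Variable R : realType.
Implicit Types (p x y : vec R).

(* Cauchy-Schwarz on the spatial parts: [(y0 p0 - 1)^2 <= (y0^2 - 1) p0^2]. *)
Lemma horosphere_future p y : future_lightlike p -> mink y y = 1 -> mink y p = 1 ->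
  0 < co y 0.
Proof.
case; rewrite !minkE.
move: (co y 0) (co y 1) (co y 2) (co y 3) (co y 4) => y0 y1 y2 y3 y4.
move: (co p 0) (co p 1) (co p 2) (co p 3) (co p 4) => p0 p1 p2 p3 p4 hp p0_gt0 hy hyp.
have CS : (y1 * p1 + y2 * p2 + y3 * p3 + y4 * p4) ^+ 2
    <= (y1 * y1 + y2 * y2 + y3 * y3 + y4 * y4) * (p1 * p1 + p2 * p2 + p3 * p3 + p4 * p4).
  rewrite -subr_ge0.
  have -> : (y1 * y1 + y2 * y2 + y3 * y3 + y4 * y4) * (p1 * p1 + p2 * p2 + p3 * p3 + p4 * p4)
      - (y1 * p1 + y2 * p2 + y3 * p3 + y4 * p4) ^+ 2
     = (y1 * p2 - y2 * p1) ^+ 2 + (y1 * p3 - y3 * p1) ^+ 2 + (y1 * p4 - y4 * p1) ^+ 2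
       + (y2 * p3 - y3 * p2) ^+ 2 + (y2 * p4 - y4 * p2) ^+ 2 + (y3 * p4 - y4 * p3) ^+ 2 by ring.
  by rewrite !addr_ge0 ?sqr_ge0.
have e1 : y1 * p1 + y2 * p2 + y3 * p3 + y4 * p4 = y0 * p0 - 1 by lra.
have e2 : y1 * y1 + y2 * y2 + y3 * y3 + y4 * y4 = y0 * y0 - 1 by lra.
have e3 : p1 * p1 + p2 * p2 + p3 * p3 + p4 * p4 = p0 * p0 by lra.
rewrite e1 e2 e3 in CS.
rewrite ltNge; apply/negP => y0_le0.
have : 0 <= - (y0 * p0) by rewrite oppr_ge0; apply: mulr_le0_ge0 => //; lra.
by nra.
Qed.

(* A parabola [t |-> x + t u + t^2 k p] inside the horosphere joining [x] to [x']. *)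
Lemma horosphere_path p x x' : future_lightlike p -> horosphere p x -> horosphere p x' ->
  exists c : R -> vec R, [/\ c 0 = x, c 1 = x', forall t, horosphere p (c t)
    & forall t (j : 'I_5), derivable (fun s => co (c s) j) t 1].
Proof.
move=> fp [[xx _] xp] [[x'x' _] x'p]; have [pp _] := fp.
set k := mink x' x - 1; set u := x' - x - k *: p.
have up : mink u p = 0 by rewrite /u !minkBl minkZl x'p xp pp; ring.
have ux : mink u x = 0 by rewrite /u !minkBl minkZl xx (minkC p) xp /k; ring.
have uu : mink u u = - 2 * k.
  rewrite /u !minkBl !minkBr !minkZl !minkZr !(minkC p) (minkC x x') x'x' xx x'p xp pp /k.
  by ring.
exists (fun t => x + t *: u + (t ^+ 2 * k) *: p); split.
- by rewrite expr0n /= mul0r !scale0r !addr0.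
- by rewrite expr1n mul1r !scale1r /u; apply/rowP => j; rewrite !mxE; ring.
- move=> t.
  have cp : mink (x + t *: u + (t ^+ 2 * k) *: p) p = 1.
    by rewrite !minkDl !minkZl up pp xp; ring.
  suff cc : mink (x + t *: u + (t ^+ 2 * k) *: p) (x + t *: u + (t ^+ 2 * k) *: p) = 1.
    by split=> //; split=> //; apply: horosphere_future fp cc cp.
  rewrite !minkDl !minkDr !minkZl !minkZr uu up pp ux xx xp (minkC x u) ux (minkC p) xp.
  by rewrite (minkC p u) up; ring.
- move=> t j; rewrite (_ : (fun s => _) =
    (fun s => co x j + s * co u j + s ^+ 2 * (k * co p j))); last first.
    by apply: boolp.funext => s /=; rewrite coD coD coZ coZ mulrA.
  move: (co x j) (co u j) (k * co p j) => A B K.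
  apply: derivableD; first apply: derivableD.
  + exact: derivable_cst.
  + by apply: derivableM; [exact: derivable_id | exact: derivable_cst].
  + apply: derivableM; last exact: derivable_cst.
    by apply: derivableM; exact: derivable_id.
Qed.

Lemma is_derive_mink (c : R -> vec R) b t :
  (forall j : 'I_5, derivable (fun s => co (c s) j) t 1) ->
  is_derive t 1 (fun s => mink (c s) b)
    (mink (\row_(j < 5) derive1 (fun s => co (c s) j) t) b).
Proof.
move=> dc; pose g (j : 'I_5) s := co (c s) j.
have gd j : is_derive t 1 (g j) ('D_1 (g j) t) by apply/derivableP/dc.
rewrite (_ : (fun s => _) = \sum_(j < 5) (eta R j j * co b j) \*: g j); last first.
  apply: boolp.funext => s; rewrite fct_sumE sum5 /g /= minkE !inordK // /eta /=.
  by rewrite /GRing.scale /=; ring.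
apply: is_derive_eq; rewrite sum5 minkE /eta !inordK //= /g /co !mxE !derive1E.
by rewrite /GRing.scale /=; ring.
Qed.

(* Differentiating along [horosphere_path]: the derivative of [V] is orthogonal to the
   tangent vector [a - <a, c t> p], and to [p] since [V] stays orthogonal to [p]. *)
Lemma parallel_mink_const p (V : vec R -> vec R) x x' a :
  future_lightlike p -> parallel p V -> (forall y, horosphere p y -> mink (V y) p = 0) ->
  horosphere p x -> horosphere p x' -> mink a p = 0 ->
  mink (V x') a = mink (V x) a.
Proof.
move=> fp par Vp hx hx' ap; have [pp _] := fp.
have [c [c0 c1 hc dc]] := horosphere_path fp hx hx'.
have fd (t : R) : is_derive t (1 : R) (fun s => mink (V (c s)) a) 0.
  have [dV orthV] := par c hc dc t.
  set D := \row_(j < 5) derive1 (fun s => co (V (c s)) j) t.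
  have Dp : mink D p = 0.
    have := @derive_val _ _ _ _ _ _ _ (is_derive_mink p dV).
    by rewrite (_ : (fun s => _) = cst 0) ?derive_cst //; apply: boolp.funext => s; rewrite Vp.
  have ta : tangent_h p (c t) (a - mink a (c t) *: p).
    have [[cc _] cp] := hc t.
    by split; rewrite minkBl minkZl ?pp ?ap ?(minkC p) ?cp; ring.
  have := orthV _ ta; rewrite minkBr minkZr Dp mulr0 subr0 => Da.
  by rewrite -Da; apply: is_derive_mink.
by have := @is_derive_0_is_cst _ _ 1 0 fd; rewrite c0 c1.
Qed.

Lemma on_geod_mink_neq0 p1 p2 x : mink p1 p1 = 0 -> mink p2 p2 = 0 -> on_geod p1 p2 x ->
  mink p1 p2 != 0.
Proof.
move=> h1 h2 [[xx _] [a [b E]]]; apply/eqP => p12; move: xx.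
rewrite E !minkDl !minkDr !minkZl !minkZr h1 h2 p12 (minkC p2) p12 !mulr0 !addr0.
by move=> /eqP; rewrite eq_sym oner_eq0.
Qed.

End Horospheres.

Section QuaternionRotations.
Variable R : realType.
Implicit Types (q : quat R) (s t : nat -> R).

Definition qconj q : quat R := Quat (qr q) (- qi q) (- qj q) (- qk q).
Definition qnorm q : R := qr q ^+ 2 + qi q ^+ 2 + qj q ^+ 2 + qk q ^+ 2.

(* Matrix of [v |-> q v q^*] on span(i, j, k), indices 0, 1, 2 standing for i, j, k;
   a rotation when [qnorm q = 1]. *)
Definition qrot q (a b : nat) : R :=
  let w := qr q in let x := qi q in let y := qj q in let z := qk q in
  match a, b with
  | 0, 0 => w^+2 + x^+2 - y^+2 - z^+2 | 0, 1 => 2 * (x * y - w * z) | 0, 2 => 2 * (x * z + w * y)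
  | 1, 0 => 2 * (x * y + w * z) | 1, 1 => w^+2 - x^+2 + y^+2 - z^+2 | 1, 2 => 2 * (y * z - w * x)
  | 2, 0 => 2 * (x * z - w * y) | 2, 1 => 2 * (y * z + w * x) | _, _ => w^+2 - x^+2 - y^+2 + z^+2
  end.

Definition flip0 s (a : nat) : R := if a == 0%N then - s 0%N else s a.

Definition rot_flip q s (a : nat) : R :=
  qrot q 0 a * flip0 s 0 + qrot q 1 a * flip0 s 1 + qrot q 2 a * flip0 s 2.

Lemma qnorm_mul q q' : qnorm (qmul q q') = qnorm q * qnorm q'.
Proof. by case: q q' => [a0 a1 a2 a3] [b0 b1 b2 b3]; rewrite /qnorm /qmul /=; ring. Qed.

Lemma qnorm_conj q : qnorm (qconj q) = qnorm q.
Proof. by case: q => [a0 a1 a2 a3]; rewrite /qnorm /qconj /=; ring. Qed.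

Lemma qrot_mul q q' a b : (a < 3)%N -> (b < 3)%N ->
  qrot (qmul q q') a b = qrot q a 0 * qrot q' 0 b + qrot q a 1 * qrot q' 1 b
    + qrot q a 2 * qrot q' 2 b.
Proof.
case: q q' => [a0 a1 a2 a3] [b0 b1 b2 b3].
by case: a => [|[|[|a]]] //; case: b => [|[|[|b]]] // _ _; rewrite /qrot /qmul /=; ring.
Qed.

Lemma qrot_conj q a b : (a < 3)%N -> (b < 3)%N -> qrot (qconj q) a b = qrot q b a.
Proof.
case: q => [a0 a1 a2 a3].
by case: a => [|[|[|a]]] //; case: b => [|[|[|b]]] // _ _; rewrite /qrot /qconj /=; ring.
Qed.

Lemma rot_flipK q s t : qnorm q = 1 -> (forall a, (a < 3)%N -> t a = rot_flip q s a) ->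
  forall b, (b < 3)%N -> flip0 s b = qrot q b 0 * t 0%N + qrot q b 1 * t 1%N + qrot q b 2 * t 2%N.
Proof.
move=> N H b hb; rewrite !H // /rot_flip.
transitivity (qnorm q ^+ 2 * flip0 s b); first by rewrite N expr1n mul1r.
move: (flip0 s) => f; case: q {N H} => [w x y z].
by case: b hb => [|[|[|b]]] // _; rewrite /qnorm /qrot /=; ring.
Qed.

Definition det3 (a b c d e f g h i : R) :=
  a * (e * i - f * h) - b * (d * i - f * g) + c * (d * h - e * g).

Lemma cramer3 (a b c d e f g h i s0 s1 s2 : R) :
  a * s0 + b * s1 + c * s2 = 0 -> d * s0 + e * s1 + f * s2 = 0 -> g * s0 + h * s1 + i * s2 = 0 ->
  [/\ det3 a b c d e f g h i * s0 = 0, det3 a b c d e f g h i * s1 = 0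
    & det3 a b c d e f g h i * s2 = 0].
Proof.
move=> E1 E2 E3; split.
- transitivity ((e * i - f * h) * (a * s0 + b * s1 + c * s2)
    - (b * i - c * h) * (d * s0 + e * s1 + f * s2)
    + (b * f - c * e) * (g * s0 + h * s1 + i * s2)); first by rewrite /det3; ring.
  by rewrite E1 E2 E3; ring.
- transitivity (- (d * i - f * g) * (a * s0 + b * s1 + c * s2)
    + (a * i - c * g) * (d * s0 + e * s1 + f * s2)
    - (a * f - c * d) * (g * s0 + h * s1 + i * s2)); first by rewrite /det3; ring.
  by rewrite E1 E2 E3; ring.
- transitivity ((d * h - e * g) * (a * s0 + b * s1 + c * s2)
    - (a * h - b * g) * (d * s0 + e * s1 + f * s2)
    + (a * e - b * d) * (g * s0 + h * s1 + i * s2)); first by rewrite /det3; ring.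
  by rewrite E1 E2 E3; ring.
Qed.

Lemma det3_flip_qrot q :
  det3 (qnorm q + qrot q 0 0) (- qrot q 1 0) (- qrot q 2 0)
       (qrot q 0 1) (qnorm q - qrot q 1 1) (- qrot q 2 1)
       (qrot q 0 2) (- qrot q 1 2) (qnorm q - qrot q 2 2)
  = 8 * qi q ^+ 2 * qnorm q ^+ 2.
Proof. by case: q => w x y z; rewrite /det3 /qrot /qnorm /=; ring. Qed.

(* [s |-> (qrot q)^T (flip0 s)] is an improper rotation, with a nonzero fixed vector
   only when it is a reflection, i.e. when [qi q = 0]. *)
Lemma rot_flip_fixed q s : qnorm q = 1 -> (forall a, (a < 3)%N -> s a = rot_flip q s a) ->
  qi q = 0 \/ [/\ s 0%N = 0, s 1%N = 0 & s 2%N = 0].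
Proof.
move=> N H.
have E a : (a < 3)%N -> s a - rot_flip q s a = 0 by move=> ha; rewrite -H // subrr.
have E0 : (qnorm q + qrot q 0 0) * s 0%N + (- qrot q 1 0) * s 1%N
    + (- qrot q 2 0) * s 2%N = 0 by rewrite N -(E 0%N isT) /rot_flip /flip0 /=; ring.
have E1 : qrot q 0 1 * s 0%N + (qnorm q - qrot q 1 1) * s 1%N
    + (- qrot q 2 1) * s 2%N = 0 by rewrite N -(E 1%N isT) /rot_flip /flip0 /=; ring.
have E2 : qrot q 0 2 * s 0%N + (- qrot q 1 2) * s 1%N
    + (qnorm q - qrot q 2 2) * s 2%N = 0 by rewrite N -(E 2%N isT) /rot_flip /flip0 /=; ring.
have [] := cramer3 E0 E1 E2; rewrite det3_flip_qrot N expr1n mulr1.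
move=> /eqP D0 /eqP D1 /eqP D2.
have [->|x_nz] := eqVneq (qi q) 0; [by left | right].
have nz : 8 * qi q ^+ 2 != 0 :> R by rewrite mulf_neq0 // sqrf_eq0.
by split; apply/eqP; [move: D0 | move: D1 | move: D2]; rewrite mulf_eq0 (negbTE nz).
Qed.

Lemma rot_flip_triangle (q1 q2 q3 : quat R) (s1 s2 s3 : nat -> R) :
  qnorm q1 = 1 -> qnorm q2 = 1 -> qnorm q3 = 1 ->
  (forall a, (a < 3)%N -> s2 a = rot_flip q1 s1 a) ->
  (forall a, (a < 3)%N -> s2 a = rot_flip q2 s3 a) ->
  (forall a, (a < 3)%N -> s1 a = rot_flip q3 s3 a) ->
  ~ [/\ s1 0%N = 0, s1 1%N = 0 & s1 2%N = 0] ->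
  qi (qmul (qmul q1 (qconj q2)) q3) = 0.
Proof.
move=> N1 N2 N3 H1 H2 H3 s1_nz.
have NW : qnorm (qmul (qmul q1 (qconj q2)) q3) = 1.
  by rewrite !qnorm_mul qnorm_conj N1 N2 N3 !mul1r.
suff fixed a : (a < 3)%N -> s1 a = rot_flip (qmul (qmul q1 (qconj q2)) q3) s1 a.
  by case: (rot_flip_fixed NW fixed).
move=> ha; rewrite H3 // /rot_flip !(rot_flipK N2 H2) // !H1 // /rot_flip.
by rewrite !qrot_mul // !qrot_conj //; ring.
Qed.

End QuaternionRotations.

Section RodriguesRotations.
Variable R : realType.

Definition axis_quat (th : R) (v : 'rV[R]_3) : quat R :=
  Quat (cos (th / 2)) (sin (th / 2) * v ord0 (inord 0)) (sin (th / 2) * v ord0 (inord 1))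
       (sin (th / 2) * v ord0 (inord 2)).

Lemma axis_quat_norm th v : unit3 v -> qnorm (axis_quat th v) = 1.
Proof.
rewrite /unit3 sum3 /qnorm /= => hv.
have := cos2Dsin2 (th / 2); move: (cos (th / 2)) (sin (th / 2)) => c s cs.
move: hv; move: (v ord0 (inord 0)) (v ord0 (inord 1)) (v ord0 (inord 2)) => v0 v1 v2 hv.
transitivity (c ^+ 2 + s ^+ 2 * (v0 ^+ 2 + v1 ^+ 2 + v2 ^+ 2)); first ring.
by rewrite hv mulr1.
Qed.

Lemma rodrigues_qrot th v a b : unit3 v -> (a < 3)%N -> (b < 3)%N ->
  rodrigues th v (inord a) (inord b) = qrot (axis_quat th v) a b.
Proof.
move=> hv ha hb.
have thE : th = th / 2 + th / 2 by rewrite -splitr.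
have cth : cos th = cos (th / 2) ^+ 2 - sin (th / 2) ^+ 2 by rewrite {1}thE cosD.
have sth : sin th = 2 * sin (th / 2) * cos (th / 2) by rewrite {1}thE sinD; ring.
rewrite /rodrigues !mxE big_ord1 !mxE !inordK // cth sth.
have -> : (inord a == inord b :> 'I_3) = (a == b) by rewrite -(inj_eq val_inj) /= !inordK.
have vE (c : nat) : (c < 3)%N -> v ord0 (inord c) =
    if c == 0%N then v ord0 (inord 0) else if c == 1%N then v ord0 (inord 1) else v ord0 (inord 2).
  by case: c => [|[|[|c]]].
rewrite (vE a) // (vE b) // /qrot /=.
have := cos2Dsin2 (th / 2); move: (cos (th / 2)) (sin (th / 2)) => c s cs.
move: hv; rewrite /unit3 sum3.
move: (v ord0 (inord 0)) (v ord0 (inord 1)) (v ord0 (inord 2)) => v0 v1 v2 hv.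
have unitE (A B k1 k2 : R) :
    A - B = k1 * (v0 ^+ 2 + v1 ^+ 2 + v2 ^+ 2 - 1) + k2 * (c ^+ 2 + s ^+ 2 - 1) -> A = B.
  by rewrite hv cs !subrr !mulr0 addr0 => /eqP; rewrite subr_eq0 => /eqP.
case: a ha => [|[|[|a]]] // _; case: b hb => [|[|[|b]]] // _ /=.
- by apply: (unitE _ _ (s ^+ 2) (- (v0 * v0))); ring.
- by apply: (unitE _ _ 0 (- (v0 * v1))); ring.
- by apply: (unitE _ _ 0 (- (v0 * v2))); ring.
- by apply: (unitE _ _ 0 (- (v1 * v0))); ring.
- by apply: (unitE _ _ (s ^+ 2) (- (v1 * v1))); ring.
- by apply: (unitE _ _ 0 (- (v1 * v2))); ring.
- by apply: (unitE _ _ 0 (- (v2 * v0))); ring.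
- by apply: (unitE _ _ 0 (- (v2 * v1))); ring.
- by apply: (unitE _ _ (s ^+ 2) (- (v2 * v2))); ring.
Qed.

(* [lam rho th v] is [e^(rho/2)] times the image of [axis_quat th v] under the
   automorphism [i |-> k, j |-> -j, k |-> i] of the quaternions, and [qinv] is [qconj]
   up to a positive factor; so [qk] of the lambda product is a multiple of [qi] of the
   product of axis quaternions. *)
Lemma lam_inV r1 t1 (v1 : 'rV[R]_3) r2 t2 (v2 : 'rV[R]_3) r3 t3 (v3 : 'rV[R]_3) :
  qi (qmul (qmul (axis_quat t1 v1) (qconj (axis_quat t2 v2))) (axis_quat t3 v3)) = 0 ->
  inV (qmul (qmul (lam r1 t1 v1) (qinv (lam r2 t2 v2))) (lam r3 t3 v3)).
Proof.
rewrite /inV /lam /qinv /axis_quat /qmul /qconj /=.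
move: (expR (r1 / 2)) (expR (r2 / 2)) (expR (r3 / 2)) => e1 e2 e3.
move: (cos (t1 / 2)) (sin (t1 / 2)) (cos (t2 / 2)) (sin (t2 / 2)) => c1 s1 c2 s2.
move: (cos (t3 / 2)) (sin (t3 / 2)) => c3 s3.
move: (v1 ord0 (inord 0)) (v1 ord0 (inord 1)) (v1 ord0 (inord 2)) => a0 a1 a2.
move: (v2 ord0 (inord 0)) (v2 ord0 (inord 1)) (v2 ord0 (inord 2)) => b0 b1 b2.
move: (v3 ord0 (inord 0)) (v3 ord0 (inord 1)) (v3 ord0 (inord 2)) => d0 d1 d2.
set n := (X in _ / X) => h.
have := congr1 (fun z => e1 * e2 * e3 / n * z) h; rewrite /= mulr0 => <-.
by rewrite /n; ring.
Qed.

End RodriguesRotations.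

Section LambdaLengths.
Variable R : realType.
Implicit Types (D : sdh R) (x y s : vec R) (M : frm R).

Lemma pconcat_1 (c d : R -> frm R) : pconcat c d 1 = d 1.
Proof.
rewrite /pconcat ifF; first by rewrite mulr1 (_ : 2 - 1 = 1 :> R) //; lra.
by apply/negbTE; rewrite -ltNge invf_lt1 //; lra.
Qed.

Lemma homotopic_end (c d : R -> frm R) : homotopic c d -> c 1 = d 1.
Proof.
case=> H [_ [_ [H1 H2]]]; have I1 : I01 (1 : R) by rewrite /I01 /=; lra.
by have [_ <-] := H1 1 I1; have [_ ->] := H2 1 I1.
Qed.

Lemma mkframe_row x e1 e2 e3 e4 (i : nat) : (i < 5)%N ->
  rowv (mkframe x e1 e2 e3 e4) i = nth x [:: x; e1; e2; e3; e4] i.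
Proof. by move=> hi; apply/rowP => j; rewrite !mxE inordK // mxE. Qed.

Lemma mapframe_row (f : vec R -> vec R) M k : rowv (mapframe f M) k = f (rowv M k).
Proof. by apply/rowP => j; rewrite !mxE. Qed.

Lemma rotframe_row (Q : 'M[R]_3) M (a : nat) : (a < 3)%N ->
  rowv (rotframe Q M) a.+1 = \sum_(b < 3) Q b (inord a) *: rowv M b.+1.
Proof.
move=> ha; apply/rowP => j; rewrite !mxE inordK; last by rewrite ltnS (ltn_trans ha).
by rewrite ifT ?ltnS // summxE; apply: eq_bigr => b _; rewrite !mxE.
Qed.

Lemma Lmap_mink_orth (p1 p2 : vec R) r w s : mink s p1 = 0 -> mink s p2 = 0 ->
  mink (Lmap p1 p2 r w) s = mink w s.
Proof. by move=> h1 h2; rewrite /Lmap !minkDl !minkZl !(minkC _ s) h1 h2; ring. Qed.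

Lemma Fout_horoframe D x : is_sdh D -> horosphere (centre D) x ->
  horoframe (centre D) (Fout D x).
Proof.
move=> [_ [_ [_ [_ [FF _]]]]] hx; split; first exact: FF.
- by rewrite !mkframe_row.
- by rewrite mkframe_row //; case: hx.
Qed.

Definition sigma D x s (a : nat) : R := mink (rowv (Fout D x) a.+1) s.

Lemma Fin_sigma D x s a : (a < 3)%N ->
  mink (rowv (Fin D x) a.+1) s = flip0 (sigma D x s) a.
Proof.
by case: a => [|[|[|a]]] // _; rewrite /flip0 /sigma /= !mkframe_row //= ?minkNl.
Qed.

Lemma sigma_transport D x x' s a : is_sdh D ->
  horosphere (centre D) x -> horosphere (centre D) x' -> mink s (centre D) = 0 ->
  (a < 3)%N -> sigma D x' s a = sigma D x s a.
Proof.
move=> SD hx hx' sp ha; have [fp [T [Pi [Pj _]]]] := SD; have [pp _] := fp.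
have vi_p y : horosphere (centre D) y -> mink (vi D y) (centre D) = 0.
  by move=> hy; have [[_ ?] _] := T y hy.
have vj_p y : horosphere (centre D) y -> mink (vj D y) (centre D) = 0.
  by move=> hy; have [_ [[_ ?] _]] := T y hy.
have e2_eq y : mink y (centre D) = 0 ->
    mink (rowv (Fout D x') 2) y = mink (rowv (Fout D x) 2) y.
  by rewrite !mkframe_row //=; apply: parallel_mink_const.
have e3_eq y : mink y (centre D) = 0 ->
    mink (rowv (Fout D x') 3) y = mink (rowv (Fout D x) 3) y.
  by rewrite !mkframe_row //=; apply: parallel_mink_const.
case: a ha => [|[|[|a]]] // _; rewrite /sigma; last by apply: e3_eq.
- exact: horoframe_e1_eq pp (Fout_horoframe SD hx) (Fout_horoframe SD hx') e2_eq e3_eq _ sp.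
- by apply: e2_eq.
Qed.

Lemma lambda_endpoint Dm Dn x y rho th v s a :
  is_sdh Dn -> horosphere (centre Dn) y -> unit3 v ->
  homotopic (pconcat (pconcat (win Dm x) (transl_path (centre Dm) (centre Dn) rho (Fin Dm x)))
               (rot_path th v (mapframe (Lmap (centre Dm) (centre Dn) rho) (Fin Dm x))))
            (wout Dn y) ->
  mink s (centre Dm) = 0 -> mink s (centre Dn) = 0 -> (a < 3)%N ->
  sigma Dn y s a = rot_flip (axis_quat th v) (sigma Dm x s) a.
Proof.
move=> [_ [_ [_ [_ [_ [W _]]]]]] hy uv hom sm sn ha.
have := homotopic_end hom; rewrite pconcat_1 /rot_path mul1r; have [_ [_ ->]] := W y hy.
move=> E; rewrite {1}/sigma -E rotframe_row // sum3 !minkDl !minkZl !mapframe_row !inordK //.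
by rewrite !Lmap_mink_orth // !Fin_sigma // /rot_flip !rodrigues_qrot.
Qed.

Lemma sigma_neq0 D x s q : is_sdh D -> horosphere (centre D) x -> s != 0 ->
  mink s (centre D) = 0 -> mink s q = 0 -> mink (centre D) q != 0 ->
  ~ [/\ sigma D x s 0 = 0, sigma D x s 1 = 0 & sigma D x s 2 = 0].
Proof.
move=> SD hx s_nz sp sq pq [s1 s2 s3]; move/eqP: s_nz; apply.
by apply: (horoframe_orth_eq0 (Fout_horoframe SD hx) sp sq pq); rewrite minkC.
Qed.

Lemma is_lambda_rot_flip Dm Dn l s : is_sdh Dm -> is_sdh Dn -> is_lambda Dm Dn l ->
  mink s (centre Dm) = 0 -> mink s (centre Dn) = 0 ->
  l = qzero R \/ exists (x y : vec R) (rho th : R) (v : 'rV[R]_3),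
    [/\ horosphere (centre Dm) x /\ horosphere (centre Dn) y,
        mink (centre Dm) (centre Dn) != 0, unit3 v, l = lam rho th v &
        forall x' y', horosphere (centre Dm) x' -> horosphere (centre Dn) y' ->
        forall a, (a < 3)%N -> sigma Dn y' s a = rot_flip (axis_quat th v) (sigma Dm x' s) a].
Proof.
move=> Sm Sn + sm sn; case=> [[_ ->]|[_ [x [y [rho [th [v [gx [hx [_ [hy [uv [hom ->]]]]]]]]]]]]].
  by left.
right.
have [[pm _] _] := Sm; have [[pn _] _] := Sn.
exists x, y, rho, th, v; split=> //; first exact: on_geod_mink_neq0 pm pn gx.
move=> x' y' hx' hy' a ha.
rewrite (sigma_transport Sn hy hy') // (lambda_endpoint _ hy uv hom) // /rot_flip /flip0 /=.
by rewrite !(sigma_transport Sm hx' hx).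
Qed.

End LambdaLengths.

Theorem proposition1p8 (R : realType) (D1 D2 D3 : sdh R) (l12 l32 l31 : quat R) :
  is_sdh D1 -> is_sdh D2 -> is_sdh D3 ->
  is_lambda D1 D2 l12 -> is_lambda D3 D2 l32 -> is_lambda D3 D1 l31 ->
  l32 <> qzero R ->
  inV (qmul (qmul l12 (qinv l32)) l31).
Proof.
move=> S1 S2 S3 L12 L32 L31 l32_nz.
have [s [s_nz sp1 sp2 sp3]] := exists_mink_orth3 (centre D1) (centre D2) (centre D3).
have [->|[x1 [y2 [r1 [t1 [v1 [[hx1 hy2] p12 u1 -> R12]]]]]]] :=
  is_lambda_rot_flip S1 S2 L12 sp1 sp2.
  by rewrite /inV /qmul /=; ring.
have [//|[x3 [_ [r2 [t2 [v2 [[hx3 _] _ u2 -> R32]]]]]]] :=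
  is_lambda_rot_flip S3 S2 L32 sp3 sp2.
have [->|[_ [_ [r3 [t3 [v3 [_ _ u3 -> R31]]]]]]] := is_lambda_rot_flip S3 S1 L31 sp3 sp1.
  by rewrite /inV /qmul /=; ring.
apply: lam_inV; apply: (rot_flip_triangle (s1 := sigma D1 x1 s) (s2 := sigma D2 y2 s)
  (s3 := sigma D3 x3 s)); rewrite ?axis_quat_norm //.
- exact: R12.
- exact: R32.
- exact: R31.
- exact: sigma_neq0 S1 hx1 s_nz sp1 sp2 p12.
Qed.
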